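(* Consider the constrained nonlinear system $x(k+1)=f(x(k),u(k))$ with $f(0,0)=0$, input constraint $u\in\mathcal{U}=\{u\in\mathbb{R}^m:|u_i|\le\bar u_i,\ i=1,\dots,m\}$ and state constraint $x\in\mathcal{X}$ with $0\in\mathcal{X}$. For a horizon $N\ge1$ and stage cost $l$, let $J(x(k),U(k|k))=\sum_{i=0}^{N-1} l(x(k+i+1|k),u(k+i|k))$ with $x(k|k)=x(k)$, $x(k+i+1|k)=f(x(k+i|k),u(k+i|k))$, and let $J^*(x(k))$ be its minimum over $u(k+i|k)\in\mathcal{U}$ subject to $x(k+i+1|k)\in\mathcal{X}$, $i=0,\dots,N-1$, with optimal controls $u^*(k+i|k)$ and optimal predicted states $x^*(k+i|k)$; the MPC law applies $u(k)=u^*(k|k)$. Define $m(x)=\min_{u\in\mathcal{U}} l(f(x,u),u)$ subject to $f(x,u)\in\mathcal{X}$. Assume there exist $\alpha_1,\alpha_2\in\mathcal{K}_\infty$ with $\alpha_1(\|x\|)\le J^*(x)\le\alpha_2(\|x\|)$ and $\alpha_1(\|x\|)\le m(x)\le\alpha_2(\|x\|)$ for all $x\in\mathcal{X}$. For $\alpha>0$ let $\mathcal{X}_T(\alpha)=\{x\in\mathcal{X}: m(x)\le\alpha\}$. If the optimisation problem is feasible for an initial state $x_0\in\mathcal{X}$ and, at every time $k\ge0$, the optimal terminal state satisfies $x^*(k+N|k)\in\mathcal{X}_T(\alpha)$ with $\alpha=m(x(k))$, then the closed-loop system under the MPC algorithm is recursively feasible and stable.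
   Context: Class $\mathcal{K}$: continuous, strictly increasing functions $\phi:\mathbb{R}_+\to\mathbb{R}_+$ with $\phi(0)=0$; class $\mathcal{K}_\infty$: class $\mathcal{K}$ and radially unbounded. Stability refers to the origin of the closed-loop system. *)

From HB Require Import structures.
From mathcomp Require Import all_boot all_order all_algebra.
From mathcomp Require Import all_classical all_reals all_analysis.
Set Implicit Arguments. Unset Strict Implicit. Unset Printing Implicit Defensive.
Import Order.TTheory GRing.Theory Num.Theory.
Import numFieldNormedType.Exports.
Local Open Scope classical_set_scope.
Local Open Scope ring_scope.

Section MPC.
Variables (R : realType) (n m : nat).
Notation state := 'rV[R]_n.
Notation input := 'rV[R]_m.

(* class K and class K_infinity functions on R_+ (represented as R -> R,
   only values on [0, +oo) matter) *)
Definition class_K (phi : R -> R) : Prop :=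
  phi 0 = 0 /\
  {within [set r : R | 0 <= r], continuous phi} /\
  (forall a b : R, 0 <= a -> a < b -> phi a < phi b).

Definition class_Kinf (phi : R -> R) : Prop :=
  class_K phi /\ (forall M : R, exists r : R, 0 <= r /\ M < phi r).

Definition Uset (ubar : input) : set input :=
  [set u | forall i : 'I_m, `|u ord0 i| <= ubar ord0 i].

Fixpoint pred_state (f : state -> input -> state) (x : state)
  (us : nat -> input) (i : nat) : state :=
  match i with
  | 0 => x
  | i'.+1 => f (pred_state f x us i') (us i')
  end.

Definition Jcost (f : state -> input -> state) (l : state -> input -> R)
  (N : nat) (x : state) (us : nat -> input) : R :=
  \sum_(i < N) l (pred_state f x us i.+1) (us i).

Definition feasible_seq (f : state -> input -> state) (X : set state)
  (ubar : input) (N : nat) (x : state) (us : nat -> input) : Prop :=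
  forall i : nat, (i < N)%N -> Uset ubar (us i) /\ X (pred_state f x us i.+1).

Definition feasible_at f X ubar N x : Prop :=
  exists us, feasible_seq f X ubar N x us.

(* optimal value J^*(x) (extended real; +oo if infeasible) *)
Definition Jstar f l X ubar N (x : state) : \bar R :=
  ereal_inf [set (Jcost f l N x us)%:E | us in feasible_seq f X ubar N x].

Definition optimal_seq f l X ubar N (x : state) (us : nat -> input) : Prop :=
  feasible_seq f X ubar N x us /\ (Jcost f l N x us)%:E = Jstar f l X ubar N x.

Definition mstage (f : state -> input -> state) (l : state -> input -> R)
  (X : set state) (ubar : input) (x : state) : \bar R :=
  ereal_inf [set (l (f x u) u)%:E | u in [set u | Uset ubar u /\ X (f x u)]].

Definition XT f l X ubar (alpha : \bar R) : set state :=
  [set x | X x /\ (mstage f l X ubar x <= alpha)%E].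

(* closed-loop MPC trajectory from x0: xs k = x(k), uss k = optimal sequence
   U^*(k|k) computed at time k (uss k i = u^*(k+i|k)); the applied input is
   u(k) = u^*(k|k) = uss k 0.  Also encodes the theorem's hypothesis that the
   optimal terminal state x^*(k+N|k) lies in X_T(m(x(k))). *)
Definition mpc_traj f l X ubar N (x0 : state) (xs : nat -> state)
  (uss : nat -> nat -> input) : Prop :=
  xs 0%N = x0 /\
  forall k : nat, feasible_at f X ubar N (xs k) ->
    [/\ optimal_seq f l X ubar N (xs k) (uss k),
        xs k.+1 = f (xs k) (uss k 0%N) &
        XT f l X ubar (mstage f l X ubar (xs k)) (pred_state f (xs k) (uss k) N)].

End MPC.

From HB Require Import structures.
From mathcomp Require Import all_boot all_order all_algebra.
From mathcomp Require Import all_classical all_reals all_analysis.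
Set Implicit Arguments. Unset Strict Implicit. Unset Printing Implicit Defensive.
Import Order.TTheory GRing.Theory Num.Theory.
Import numFieldNormedType.Exports.
Local Open Scope classical_set_scope.
Local Open Scope ring_scope.

(* The optimal value J^* is a Lyapunov function of the closed loop.  Drop
   the first input of an optimal sequence at x and append any input u that
   is admissible for m at the optimal terminal state x_T: the result is
   feasible at the successor x1 = f(x, u^*(0)) and costs
   J^*(x) - l(x1, u^*(0)) + l(f(x_T, u), u), so taking the infimum over u,
   J^*(x1) <= J^*(x) - l(x1, u^*(0)) + m(x_T).  As u^*(0) is admissible for
   m at x, m(x_T) <= m(x) <= l(x1, u^*(0)); hence such u exist and J^* does
   not increase, and alpha1(|x(k)|) <= J^*(x(k)) <= J^*(x0) <= alpha2(|x0|)
   yields stability. *)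

Section ClassK.
Variables (R : realType) (phi : R -> R).
Hypothesis phiK : class_K phi.

Lemma class_K_gt0 (r : R) : 0 < r -> 0 < phi r.
Proof. by case: phiK => phi0 [_ phi_lt] r0; rewrite -phi0 phi_lt. Qed.

Lemma class_K_ltW (a b : R) : 0 <= a -> 0 <= b -> phi a < phi b -> a < b.
Proof.
case: phiK => _ [_ phi_lt] a0 b0 phi_ab; have [//|ba] := ltP a b.
move: phi_ab; rewrite ltNge => /negP; case.
by move: ba; rewrite le_eqVlt => /predU1P[->//|/(phi_lt _ _ b0)/ltW].
Qed.

Lemma class_K_small_arg (c : R) : 0 < c -> exists d, 0 < d /\ phi d < c.
Proof.
case: phiK => phi0 [phi_cont _] c0.
have : {within `[0, +oo[, continuous phi} by rewrite set_itvcy.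
move=> /continuous_within_itvcyP[_ phi_cvg].
have : \forall t \near 0^'+, phi t < c.
  by apply: (@cvgr_lt R R _ _ phi (phi 0) phi_cvg); rewrite phi0.
by move=> /(filterI (nbhs_right_gt 0)) /filter_ex[d []]; exists d.
Qed.

End ClassK.

Section OneStep.
Variables (R : realType) (n m : nat).
Variables (f : 'rV[R]_n -> 'rV[R]_m -> 'rV[R]_n) (l : 'rV[R]_n -> 'rV[R]_m -> R).
Variables (X : set 'rV[R]_n) (ubar : 'rV[R]_m).

Local Notation J := (Jcost f l).
Local Notation Jstar := (Jstar f l X ubar).
Local Notation mstage := (mstage f l X ubar).

Definition shift_seq (us : nat -> 'rV[R]_m) (N : nat) (u : 'rV[R]_m) :
    nat -> 'rV[R]_m :=
  fun i => if (i < N)%N then us i.+1 else u.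

Lemma pred_state_shift x us N u i : (i <= N)%N ->
  pred_state f (f x (us 0%N)) (shift_seq us N u) i = pred_state f x us i.+1.
Proof.
elim: i => [|i IH] //= ltiN.
by rewrite IH ?(ltnW ltiN) // /shift_seq ltiN.
Qed.

Lemma feasible_seq_shift x us N u :
  feasible_seq f X ubar N.+1 x us -> Uset ubar u ->
  X (f (pred_state f x us N.+1) u) ->
  feasible_seq f X ubar N.+1 (f x (us 0%N)) (shift_seq us N u).
Proof.
move=> feas Uu Xu i; rewrite ltnS leq_eqVlt => /predU1P[->|ltiN].
  by rewrite /= pred_state_shift // /shift_seq ltnn.
by rewrite pred_state_shift // /shift_seq ltiN; apply: feas.
Qed.

Lemma Jcost_shift x us N u :
  J N.+1 (f x (us 0%N)) (shift_seq us N u) =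
  J N.+1 x us - l (f x (us 0%N)) (us 0%N) + l (f (pred_state f x us N.+1) u) u.
Proof.
rewrite /Jcost big_ord_recr big_ord_recl /= [_ + \sum_(_ < _) _]addrC addrK.
congr (_ + _); last by rewrite pred_state_shift // /shift_seq ltnn.
by apply: eq_bigr => i _; rewrite pred_state_shift 1?ltnW // /shift_seq ltn_ord.
Qed.

Lemma mstage_le_stage x u :
  Uset ubar u -> X (f x u) -> (mstage x <= (l (f x u) u)%:E)%E.
Proof. by move=> Uu Xu; apply: ereal_inf_lbound; exists u. Qed.

Lemma Jstar_le_Jcost N x us :
  feasible_seq f X ubar N x us -> (Jstar N x <= (J N x us)%:E)%E.
Proof. by move=> feas; apply: ereal_inf_lbound; exists us. Qed.

Lemma feasible_at_shift x us N :
  feasible_seq f X ubar N.+1 x us ->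
  (mstage (pred_state f x us N.+1) < +oo)%E ->
  feasible_at f X ubar N.+1 (f x (us 0%N)).
Proof.
move=> feas /ereal_inf_lt[_ [u [Uu Xu] _] _].
by exists (shift_seq us N u); apply: feasible_seq_shift.
Qed.

Lemma Jstar_shift_le x us N :
  feasible_seq f X ubar N.+1 x us ->
  (Jstar N.+1 (f x (us 0%N)) <=
   (J N.+1 x us - l (f x (us 0%N)) (us 0%N))%:E
   + mstage (pred_state f x us N.+1))%E.
Proof.
move=> feas; rewrite addeC -leeBlDr //.
apply: le_ereal_inf_tmp => _ [u [Uu Xu] <-].
rewrite leeBlDr // -EFinD addrC -Jcost_shift.
by apply/Jstar_le_Jcost/feasible_seq_shift.
Qed.

Lemma mpc_step x us N :
  optimal_seq f l X ubar N.+1 x us ->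
  XT f l X ubar (mstage x) (pred_state f x us N.+1) ->
  feasible_at f X ubar N.+1 (f x (us 0%N)) /\
  (Jstar N.+1 (f x (us 0%N)) <= Jstar N.+1 x)%E.
Proof.
move=> [feas Jopt] [_ mxT].
have [U0 X1] := feas 0%N isT.
have mT_le : (mstage (pred_state f x us N.+1) <= (l (f x (us 0%N)) (us 0%N))%:E)%E.
  exact: le_trans mxT (mstage_le_stage U0 X1).
split; first by apply: feasible_at_shift feas (le_lt_trans mT_le (ltry _)).
apply: le_trans (Jstar_shift_le feas) _.
rewrite -Jopt -[in leRHS](subrK (l (f x (us 0%N)) (us 0%N)) (J N.+1 x us)).
by rewrite [in leRHS]EFinD leeD2l.
Qed.

End OneStep.

Section ClosedLoop.
Variables (R : realType) (n m : nat).
Variables (f : 'rV[R]_n -> 'rV[R]_m -> 'rV[R]_n) (l : 'rV[R]_n -> 'rV[R]_m -> R).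
Variables (X : set 'rV[R]_n) (ubar : 'rV[R]_m) (N : nat).
Variables (x0 : 'rV[R]_n) (xs : nat -> 'rV[R]_n) (uss : nat -> nat -> 'rV[R]_m).
Hypotheses (x0_feasible : feasible_at f X ubar N.+1 x0)
           (traj : mpc_traj f l X ubar N.+1 x0 xs uss).

Lemma mpc_traj_feasible k : feasible_at f X ubar N.+1 (xs k).
Proof.
case: traj => xs0 step; elim: k => [|k Fk]; first by rewrite xs0.
by have [opt -> XTk] := step k Fk; case: (mpc_step opt XTk).
Qed.

Lemma mpc_traj_in_X k : X x0 -> X (xs k).
Proof.
case: k => [|k] Xx0; first by rewrite traj.1.
have [[feas _] -> _] := traj.2 k (mpc_traj_feasible k).
by case: (feas 0%N isT).
Qed.

Lemma mpc_traj_Jstar_le k :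
  (Jstar f l X ubar N.+1 (xs k) <= Jstar f l X ubar N.+1 x0)%E.
Proof.
elim: k => [|k IH]; first by rewrite traj.1.
have [opt -> XTk] := traj.2 k (mpc_traj_feasible k).
by case: (mpc_step opt XTk) => _ /le_trans; apply.
Qed.

End ClosedLoop.

Theorem theorem8 (R : realType) (n m : nat)
  (f : 'rV[R]_n -> 'rV[R]_m -> 'rV[R]_n) (l : 'rV[R]_n -> 'rV[R]_m -> R)
  (X : set 'rV[R]_n) (ubar : 'rV[R]_m) (N : nat)
  (alpha1 alpha2 : R -> R) :
  f 0 0 = 0 ->
  X 0 ->
  (1 <= N)%N ->
  class_Kinf alpha1 -> class_Kinf alpha2 ->
  (forall x, X x ->
     ((alpha1 `|x|)%:E <= Jstar f l X ubar N x)%E /\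
     (Jstar f l X ubar N x <= (alpha2 `|x|)%:E)%E) ->
  (forall x, X x ->
     ((alpha1 `|x|)%:E <= mstage f l X ubar x)%E /\
     (mstage f l X ubar x <= (alpha2 `|x|)%:E)%E) ->
  (* recursive feasibility *)
  (forall (x0 : 'rV[R]_n) (xs : nat -> 'rV[R]_n) (uss : nat -> nat -> 'rV[R]_m),
     X x0 -> feasible_at f X ubar N x0 -> mpc_traj f l X ubar N x0 xs uss ->
     forall k : nat, feasible_at f X ubar N (xs k)) /\
  (* (Lyapunov) stability of the origin of the closed loop *)
  (forall eps : R, 0 < eps -> exists delta : R, 0 < delta /\
     forall (x0 : 'rV[R]_n) (xs : nat -> 'rV[R]_n) (uss : nat -> nat -> 'rV[R]_m),
       X x0 -> feasible_at f X ubar N x0 -> mpc_traj f l X ubar N x0 xs uss ->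
       `|x0| < delta -> forall k : nat, `|xs k| < eps).
Proof.
move=> _ _ N_gt0 [a1K _] [a2K _] J_bounds _.
case: N N_gt0 J_bounds => // N _ J_bounds.
split=> [x0 xs uss _ F0 traj|eps eps_gt0]; first exact: mpc_traj_feasible traj.
have [d [d_gt0 a2d_lt]] := class_K_small_arg a2K (class_K_gt0 a1K eps_gt0).
exists d; split=> // x0 xs uss Xx0 F0 traj x0_lt k.
have Xk := mpc_traj_in_X F0 traj k Xx0.
have : ((alpha1 `|xs k|)%:E <= (alpha2 `|x0|)%:E)%E.
  apply: le_trans (J_bounds _ Xk).1 (le_trans _ (J_bounds _ Xx0).2).
  exact: mpc_traj_Jstar_le F0 traj k.
rewrite lee_fin => a1_le; apply: (class_K_ltW a1K) => //; first exact: ltW.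
case: a2K => _ [_ a2_lt].
exact: le_lt_trans a1_le (lt_trans (a2_lt _ _ (normr_ge0 _) x0_lt) a2d_lt).
Qed.
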